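(* Consider an instance of $\mathrm{BAL}(\mu,\nu)$ in the correlated setting. (1) If $\mathcal T^k\subseteq V\times\{0\}$ is a set of size $k$ maximizing $\Psi$ and $\mathcal S^k\subseteq\hat V$ is a set of size $k$ maximizing $\Phi^{\ge1}$, then $\Psi(\mathcal T^k)\ge\Phi^{\ge1}(\mathcal S^k)$. (2) Let $\varepsilon>0$ and $k\ge\nu/\varepsilon$. If $\mathcal T^k\subseteq V\times\{0\}$ is a set of size $k$ maximizing $\Psi$ and $\mathcal T^{\lfloor k/\nu\rfloor}\subseteq V\times\{0\}$ is a set of size $\lfloor k/\nu\rfloor$ maximizing $\Psi$, then $\Psi(\mathcal T^{\lfloor k/\nu\rfloor})\ge\frac{1-\varepsilon}{\nu+1}\Psi(\mathcal T^k)$. (3) Let $\mathcal T\subseteq V\times\{0\}$ be of size $\lfloor k/\nu\rfloor$. Then $\mathcal S'=\{(v,j):(v,0)\in\mathcal T,\ j\in[\nu]\}\subseteq\hat V$ has size at most $k$ and $\Phi^{\ge1}(\mathcal S')=\Psi(\mathcal T)$.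
   Context: Triggering model: for a directed graph $G=(V,E)$ and $p:E\to[0,1]$, an outcome $X=(T_v)_{v\in V}$ is obtained by having each node $v$ independently choose a subset $T_v$ of its in-neighbours $N_v$, with $T_v=S$ with probability $\prod_{u\in S}p_{uv}\prod_{u\in N_v\setminus S}(1-p_{uv})$; $\rho_X(A)$ is the set of nodes reachable from $A\subseteq V$ via arcs $\{(u,v):u\in T_v\}$. $\mathrm{BAL}(\mu,\nu)$ for integer constants $\mu\ge\nu\ge2$: instance = directed graph $G=(V,E)$, seed sets $\mathcal I=(I_1,\dots,I_\mu)$, budget $k\ge2$, and probability functions $p_1,\dots,p_\mu$; in the correlated setting $p_1=\dots=p_\mu=p$ and a single outcome $X$ w.r.t. $p$ is used by all campaigns (campaign $i$ reaches $v$ from seeds $A_i$ iff $v\in\rho_X(A_i)$). Let $\hat V=V\times[\mu]$; $\mathcal S\subseteq\hat V$ is identified with $(S_1,\dots,S_\mu)$, $S_i=\{v:(v,i)\in\mathcal S\}$. $V^j_X$ is the set of nodes reached by exactly $j$ campaigns from seeds $\mathcal I$. $\Phi^{\ge1}(\mathcal S)$ is the expected number of nodes $v\notin V^0_X$ reached by at least $\nu$ campaigns from seeds $(I_i\cup S_i)_i$ (equivalently, by none or at least $\nu$). For $\mathcal T\subseteq V\times\{0\}$ with underlying node set $T$, $\Psi(\mathcal T)=\mathbb E_X\big[\big|(\rho_X(T)\cap\bigcup_{j=1}^{\nu-1}V^j_X)\cup\bigcup_{j=\nu}^{\mu}V^j_X\big|\big]$. *)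

From mathcomp Require Import all_boot all_order all_algebra.
Set Implicit Arguments. Unset Strict Implicit. Unset Printing Implicit Defensive.
Import Order.TTheory GRing.Theory Num.Theory.
Local Open Scope ring_scope.

Definition in_nbrs (V : finType) (E : rel V) (v : V) : {set V} := [set u | E u v].

(* An outcome X = (T_v)_v of the triggering model. *)
Definition outcome (V : finType) := {ffun V -> {set V}}.

Definition prob_outcome (R : realFieldType) (V : finType) (E : rel V)
  (p : V -> V -> R) (X : outcome V) : R :=
  \prod_(v : V)
    (if X v \subset in_nbrs E v then
       (\prod_(u in X v) p u v) * \prod_(u in in_nbrs E v :\: X v) (1 - p u v)
     else 0).

Definition expect (R : realFieldType) (V : finType) (E : rel V)
  (p : V -> V -> R) (f : outcome V -> R) : R :=
  \sum_(X : outcome V) prob_outcome E p X * f X.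

(* rho_X(A): nodes reachable from A via live arcs {(u,v) | u \in T_v}. *)
Definition rho (V : finType) (X : outcome V) (A : {set V}) : {set V} :=
  [set v | [exists a in A, connect [rel u w | u \in X w] a v]].

Definition ncamp (V : finType) (mu : nat) (X : outcome V)
  (A : 'I_mu -> {set V}) (v : V) : nat :=
  #|[set i : 'I_mu | v \in rho X (A i)]|.

Definition Vj (V : finType) (mu : nat) (X : outcome V)
  (I : 'I_mu -> {set V}) (j : nat) : {set V} :=
  [set v | ncamp X I v == j].

Definition Scomp (V : finType) (mu : nat) (S : {set V * 'I_mu}) (i : 'I_mu)
  : {set V} := [set v | (v, i) \in S].

Definition PhiGe1 (R : realFieldType) (V : finType) (E : rel V)
  (p : V -> V -> R) (mu nu : nat) (I : 'I_mu -> {set V})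
  (S : {set V * 'I_mu}) : R :=
  expect E p (fun X =>
    (#|[set v | (v \notin Vj X I 0)
               && (nu <= ncamp X (fun i => I i :|: Scomp S i) v)%N]|)%:R).

(* Psi(T), with T a subset of V x {0} identified with its node set T. *)
Definition Psi (R : realFieldType) (V : finType) (E : rel V)
  (p : V -> V -> R) (mu nu : nat) (I : 'I_mu -> {set V}) (T : {set V}) : R :=
  expect E p (fun X =>
    (#|(rho X T :&: \bigcup_(1 <= j < nu) Vj X I j)
        :|: \bigcup_(nu <= j < mu.+1) Vj X I j|)%:R).

From mathcomp Require Import all_boot all_order all_algebra.
From mathcomp Require Import zify lra.
Set Implicit Arguments. Unset Strict Implicit. Unset Printing Implicit Defensive.
Import Order.TTheory GRing.Theory Num.Theory.
Local Open Scope ring_scope.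

(* Fix an outcome X. A node counted by Phi^{>=1}(S) that is not reached from
   the node set T of S gains no campaign from S, so it already lies in some
   V^j_X with j >= nu; hence Phi^{>=1}(S) <= Psi(T) with |T| <= |S|, which gives
   (1). Seeding T into nu campaigns makes every node of rho_X(T) reached by at
   least nu campaigns, which gives the equality in (3). Since
   rho_X(A u B) = rho_X(A) u rho_X(B), Psi is monotone and subadditive; covering
   a k-set by k/q + 1 sets of size q = k/nu (integer division) yields
   Psi(T^k) <= (k/q + 1) Psi(T^q), and eps k >= nu bounds (1 - eps)(k/q + 1)
   by nu + 1, which gives (2). *)

Section CardinalitySelection.
Variable T : finType.

Lemma exists_subset_card (A : {set T}) n :
  (n <= #|A|)%N -> exists2 B : {set T}, B \subset A & #|B| = n.
Proof.
move/card_geqP=> [s [s_uniq s_size sA]].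
exists [set x in s]; first by apply/subsetP=> x; rewrite inE => /sA.
by rewrite cardsE (card_uniqP s_uniq).
Qed.

Lemma exists_superset_card (A : {set T}) n :
  (#|A| <= n <= #|T|)%N -> exists2 B : {set T}, A \subset B & #|B| = n.
Proof.
move=> /andP[An nT].
have [D DA cardD] : exists2 D : {set T}, D \subset ~: A & #|D| = (#|T| - n)%N.
  by apply: exists_subset_card; rewrite -(cardsC A); lia.
by exists (~: D); [rewrite subsetC | rewrite cardsCs setCK cardD; lia].
Qed.

End CardinalitySelection.

Section MonotoneSetFunction.
Variables (R : numDomainType) (T : finType) (f : {set T} -> R).
Hypothesis f_mono : forall A B : {set T}, A \subset B -> f A <= f B.

Lemma le_max_card k M :
  (k <= #|T|)%N -> (forall B : {set T}, #|B| = k -> f B <= M) ->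
  forall A : {set T}, (#|A| <= k)%N -> f A <= M.
Proof.
move=> kT fM A Ak.
have /exists_superset_card[B AB cardB] : (#|A| <= k <= #|T|)%N by rewrite Ak kT.
exact: le_trans (f_mono AB) (fM B cardB).
Qed.

Hypothesis f_subadd : forall A B : {set T}, f (A :|: B) <= f A + f B.

Lemma subadditive_le_cover q M :
  (q <= #|T|)%N -> (forall B : {set T}, #|B| = q -> f B <= M) ->
  forall n (A : {set T}), (#|A| <= n.+1 * q)%N -> f A <= n.+1%:R * M.
Proof.
move=> qT fM; elim=> [|n IHn] A cardA.
  by rewrite mul1r; apply: (le_max_card qT fM); rewrite mul1n in cardA.
have [B BA cardB] := exists_subset_card (geq_minr q #|A|).
rewrite -(setID A B) (setIidPr BA).
apply: le_trans (f_subadd _ _) _; rewrite [n.+2%:R]mulrSr mulrDl mul1r addrC.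
apply: lerD; last by apply: (le_max_card qT fM); rewrite cardB geq_minl.
apply: IHn; rewrite cardsD (setIidPr BA) cardB; move: cardA; rewrite mulSn; lia.
Qed.

End MonotoneSetFunction.

Section Expectation.
Variables (R : realFieldType) (V : finType) (E : rel V) (p : V -> V -> R).
Hypothesis p_prob : forall u v, E u v -> 0 <= p u v <= 1.

Lemma prob_outcome_ge0 X : 0 <= prob_outcome E p X.
Proof.
apply: prodr_ge0 => v _; case: ifP => // /subsetP XN.
apply: mulr_ge0; apply: prodr_ge0 => u.
  by move/XN; rewrite inE => /p_prob /andP[].
by rewrite !inE => /andP[_ /p_prob /andP[_]]; rewrite subr_ge0.
Qed.

Lemma ler_expect f g : (forall X, f X <= g X) -> expect E p f <= expect E p g.
Proof. by move=> fg; apply: ler_sum => X _; rewrite ler_wpM2l ?prob_outcome_ge0. Qed.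

Lemma expect_ge0 f : (forall X, 0 <= f X) -> 0 <= expect E p f.
Proof. by move=> f0; apply: sumr_ge0 => X _; apply: mulr_ge0 (prob_outcome_ge0 X) (f0 X). Qed.

Lemma expectD f g : expect E p (fun X => f X + g X) = expect E p f + expect E p g.
Proof. by rewrite /expect -big_split; apply: eq_bigr => X _; rewrite mulrDr. Qed.

End Expectation.

Lemma mem_bigcup_seq (T : finType) (J : Type) (r : seq J) (F : J -> {set T}) x :
  (x \in \bigcup_(j <- r) F j) = has (fun j => x \in F j) r.
Proof. by elim: r => [|j r IHr]; rewrite ?big_nil ?big_cons inE // IHr. Qed.

Section Reachability.
Variables (V : finType) (X : outcome V).

Lemma rhoS (A B : {set V}) : A \subset B -> rho X A \subset rho X B.
Proof.
move/subsetP=> AB; apply/subsetP=> v; rewrite !inE => /existsP[a /andP[aA av]].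
by apply/existsP; exists a; rewrite AB.
Qed.

Lemma rho0 : rho X set0 = set0.
Proof. by apply/setP=> v; rewrite !inE; apply/existsP=> -[a]; rewrite inE. Qed.

Lemma rhoU (A B : {set V}) : rho X (A :|: B) = rho X A :|: rho X B.
Proof.
apply/setP=> v; rewrite !inE; apply/existsP/orP => [[a /andP[]] | ].
  by rewrite inE => /orP[] aAB av; [left | right]; apply/existsP; exists a; rewrite aAB.
by case=> /existsP[a /andP[aAB av]]; exists a; rewrite inE aAB ?orbT.
Qed.

Variable mu : nat.

Lemma ncamp_le (A : 'I_mu -> {set V}) v : (ncamp X A v <= mu)%N.
Proof. exact: leq_trans (max_card _) (eq_leq (card_ord mu)). Qed.

Lemma in_ncamp_set (A : 'I_mu -> {set V}) v i :
  (i \in [set j | v \in rho X (A j)]) = (v \in rho X (A i)).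
Proof. by rewrite [LHS]inE. Qed.

Lemma ncamp_seedsU (A B : 'I_mu -> {set V}) v :
  (forall i, v \notin rho X (B i)) -> ncamp X (fun i => A i :|: B i) v = ncamp X A v.
Proof.
by move=> vB; apply: eq_card => i; rewrite !in_ncamp_set rhoU inE (negbTE (vB i)) orbF.
Qed.

Lemma mem_bigcup_Vj (I : 'I_mu -> {set V}) a b v :
  (v \in \bigcup_(a <= j < b) Vj X I j) = (a <= ncamp X I v < b)%N.
Proof.
rewrite mem_bigcup_seq; apply/hasP/idP => [[j] | vab].
  by rewrite mem_index_iota inE => ? /eqP ->.
by exists (ncamp X I v); rewrite ?mem_index_iota ?inE.
Qed.

End Reachability.

Lemma card_ord_lt mu nu : (nu <= mu)%N -> #|[set i : 'I_mu | (i < nu)%N]| = nu.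
Proof.
move=> nu_mu; rewrite -sum1_card (eq_bigl (fun i : 'I_mu => (i < nu)%N)) => [|i].
  by rewrite (big_ord_narrow nu_mu) sum1_card card_ord.
by rewrite inE.
Qed.

Lemma cover_count_bound (R : realFieldType) (eps : R) (k nu : nat) :
  0 <= eps <= 1 -> nu%:R <= k%:R * eps -> (0 < k %/ nu)%N ->
  (1 - eps) * (k %/ (k %/ nu)).+1%:R <= nu.+1%:R.
Proof.
move=> /andP[eps_ge0 eps_le1] nu_keps q_gt0.
have nu_gt0 : (0 < nu)%N by rewrite lt0n; apply: contraTneq q_gt0 => ->; rewrite divn0.
set q := (k %/ nu)%N in q_gt0 *; set n := (k %/ q)%N.
have nq_le : n.+1%:R * q%:R <= k%:R + q%:R :> R.
  by rewrite -natrM -natrD ler_nat mulSnr leq_add2r leq_divM.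
have k_le : k%:R <= (q%:R + 1) * nu%:R :> R.
  by rewrite natr1 -natrM ler_nat ltnW // ltn_ceil.
have q_pos : 0 < q%:R :> R by rewrite ltr0n.
rewrite -(ler_pM2r q_pos) -natr1.
have : 0 <= (1 - eps) * (k%:R + q%:R - (n%:R + 1) * q%:R) by apply: mulr_ge0; lra.
have : 0 <= eps * q%:R by apply: mulr_ge0; lra.
nra.
Qed.

Section Objectives.
Variables (R : realFieldType) (V : finType) (E : rel V) (p : V -> V -> R).
Variables (mu nu : nat) (I : 'I_mu -> {set V}).
Hypothesis p_prob : forall u v, E u v -> 0 <= p u v <= 1.
Hypothesis nu_gt0 : (0 < nu)%N.

Definition psi_nodes (X : outcome V) (T : {set V}) : {set V} :=
  (rho X T :&: \bigcup_(1 <= j < nu) Vj X I j) :|: \bigcup_(nu <= j < mu.+1) Vj X I j.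

Definition phi_nodes (X : outcome V) (S : {set V * 'I_mu}) : {set V} :=
  [set v | (v \notin Vj X I 0) && (nu <= ncamp X (fun i => I i :|: Scomp S i) v)%N].

Lemma mem_psi_nodes X T v : v \in psi_nodes X T =
  (0 < ncamp X I v)%N && ((v \in rho X T) || (nu <= ncamp X I v)%N).
Proof.
rewrite in_setU in_setI !mem_bigcup_Vj ltnS ncamp_le andbT.
case: (ltnP (ncamp X I v) nu) => [c_nu | nu_c]; first by rewrite andbT !orbF andbC.
by rewrite !orbT andbT (leq_trans nu_gt0 nu_c).
Qed.

Lemma mem_phi_nodes X S v : v \in phi_nodes X S =
  (0 < ncamp X I v)%N && (nu <= ncamp X (fun i => I i :|: Scomp S i) v)%N.
Proof. by rewrite !inE lt0n. Qed.

Lemma psi_nodesS X (A B : {set V}) : A \subset B -> psi_nodes X A \subset psi_nodes X B.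
Proof. by move=> AB; apply/setSU/setSI/rhoS. Qed.

Lemma psi_nodesU X (A B : {set V}) :
  psi_nodes X (A :|: B) = psi_nodes X A :|: psi_nodes X B.
Proof. by rewrite /psi_nodes rhoU setIUl setUACA setUid. Qed.

Lemma PsiE (T : {set V}) :
  Psi E p nu I T = expect E p (fun X => #|psi_nodes X T|%:R).
Proof. by []. Qed.

Lemma PhiGe1E (S : {set V * 'I_mu}) :
  PhiGe1 E p nu I S = expect E p (fun X => #|phi_nodes X S|%:R).
Proof. by []. Qed.

Lemma PsiS (A B : {set V}) : A \subset B -> Psi E p nu I A <= Psi E p nu I B.
Proof.
move=> AB; rewrite !PsiE; apply: ler_expect => // X; rewrite ler_nat.
exact/subset_leq_card/psi_nodesS.
Qed.

Lemma Psi_ge0 (A : {set V}) : 0 <= Psi E p nu I A.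
Proof. exact: expect_ge0. Qed.

Lemma Psi_subadd (A B : {set V}) :
  Psi E p nu I (A :|: B) <= Psi E p nu I A + Psi E p nu I B.
Proof.
rewrite !PsiE -expectD; apply: ler_expect => // X; rewrite -natrD ler_nat.
by rewrite psi_nodesU leq_card_setU.
Qed.

Lemma phi_nodes_sub_psi_nodes X S :
  phi_nodes X S \subset psi_nodes X [set vi.1 | vi in S].
Proof.
apply/subsetP=> v; rewrite mem_phi_nodes mem_psi_nodes => /andP[-> nu_c] /=.
have [//|v_notin] := boolP (v \in rho X _).
rewrite -(ncamp_seedsU _ (B := Scomp S)) // => i.
apply: contra v_notin; apply/subsetP/rhoS/subsetP=> x; rewrite inE => xi.
by apply/imsetP; exists (x, i).
Qed.

Lemma PhiGe1_le_Psi S : PhiGe1 E p nu I S <= Psi E p nu I [set vi.1 | vi in S].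
Proof.
rewrite PhiGe1E PsiE; apply: ler_expect => // X; rewrite ler_nat.
exact/subset_leq_card/phi_nodes_sub_psi_nodes.
Qed.

Definition replicate_seeds (T : {set V}) : {set V * 'I_mu} :=
  [set vj : V * 'I_mu | (vj.1 \in T) && (vj.2 < nu)%N].

Lemma Scomp_replicate T i :
  Scomp (replicate_seeds T) i = if (i < nu)%N then T else set0.
Proof. by apply/setP=> x; rewrite !inE /=; case: ifP; rewrite ?andbT ?andbF ?inE. Qed.

Hypothesis nu_le_mu : (nu <= mu)%N.

Lemma card_replicate_seeds T : #|replicate_seeds T| = (#|T| * nu)%N.
Proof.
have -> : replicate_seeds T = setX T [set i : 'I_mu | (i < nu)%N].
  by apply/setP=> -[v i]; rewrite !inE.
by rewrite cardsX card_ord_lt.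
Qed.

Lemma phi_nodes_replicate X T : phi_nodes X (replicate_seeds T) = psi_nodes X T.
Proof.
apply/setP=> v; rewrite mem_phi_nodes mem_psi_nodes.
have [vT | v_notin] /= := boolP (v \in rho X T).
  rewrite -{1}(card_ord_lt nu_le_mu); congr andb; apply/subset_leq_card/subsetP=> i.
  by rewrite inE in_ncamp_set Scomp_replicate => ->; rewrite rhoU inE vT orbT.
rewrite ncamp_seedsU // => i.
by rewrite Scomp_replicate; case: ifP => // _; rewrite rho0 inE.
Qed.

Lemma PhiGe1_replicate T : PhiGe1 E p nu I (replicate_seeds T) = Psi E p nu I T.
Proof.
by rewrite PhiGe1E PsiE /expect; apply: eq_bigr => X _; rewrite phi_nodes_replicate.
Qed.

Lemma PhiGe1_le_Psi_max k (Tk : {set V}) (S : {set V * 'I_mu}) :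
  #|Tk| = k -> (forall T : {set V}, #|T| = k -> Psi E p nu I T <= Psi E p nu I Tk) ->
  (#|S| <= k)%N -> PhiGe1 E p nu I S <= Psi E p nu I Tk.
Proof.
move=> cardTk Tk_max cardS; apply: le_trans (PhiGe1_le_Psi S) _.
apply: (le_max_card PsiS _ Tk_max); first by rewrite -cardTk max_card.
exact: leq_trans (leq_imset_card _ _) cardS.
Qed.

Lemma Psi_max_div_nu (eps : R) k (Tk Tkn : {set V}) :
  (0 < k)%N -> 0 < eps -> nu%:R / eps <= k%:R ->
  #|Tk| = k -> #|Tkn| = (k %/ nu)%N ->
  (forall T : {set V}, #|T| = (k %/ nu)%N -> Psi E p nu I T <= Psi E p nu I Tkn) ->
  (1 - eps) / nu.+1%:R * Psi E p nu I Tk <= Psi E p nu I Tkn.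
Proof.
move=> k_gt0 eps_gt0 nu_k cardTk cardTkn Tkn_max.
have P_ge0 := Psi_ge0 Tk; have M_ge0 := Psi_ge0 Tkn.
have nu1_gt0 : 0 < nu.+1%:R :> R by rewrite ltr0n.
have [eps_ge1 | eps_lt1] := lerP 1 eps.
  apply: le_trans M_ge0; apply: mulr_le0_ge0 P_ge0.
  by apply: mulr_le0_ge0; [lra | rewrite invr_ge0 ltW].
have nu_keps : nu%:R <= k%:R * eps by rewrite -ler_pdivrMr.
have q_gt0 : (0 < k %/ nu)%N.
  rewrite divn_gt0 // -(ler_nat R); apply: (le_trans nu_keps).
  by rewrite ler_piMr ?ler0n ?ltW.
set n := (k %/ (k %/ nu))%N.
have cover : Psi E p nu I Tk <= n.+1%:R * Psi E p nu I Tkn.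
  apply: (subadditive_le_cover PsiS Psi_subadd _ Tkn_max); first by rewrite -cardTkn max_card.
  by rewrite cardTk ltnW // ltn_ceil.
have count : (1 - eps) * n.+1%:R <= nu.+1%:R.
  by apply: cover_count_bound nu_keps q_gt0; rewrite (ltW eps_gt0) (ltW eps_lt1).
rewrite mulrAC ler_pdivrMr //; nra.
Qed.

End Objectives.

Theorem mainTheorem12 (R : realFieldType) (V : finType) (E : rel V)
  (p : V -> V -> R) (mu nu : nat) (I : 'I_mu -> {set V}) (k : nat) :
  (2 <= nu)%N -> (nu <= mu)%N -> (2 <= k)%N ->
  (forall u v, E u v -> 0 <= p u v <= 1) ->
  (* (1) *)
  (forall (Tk : {set V}) (Sk : {set V * 'I_mu}),
     #|Tk| = k ->
     (forall T' : {set V}, #|T'| = k -> Psi E p nu I T' <= Psi E p nu I Tk) ->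
     #|Sk| = k ->
     (forall S' : {set V * 'I_mu}, #|S'| = k ->
        PhiGe1 E p nu I S' <= PhiGe1 E p nu I Sk) ->
     PhiGe1 E p nu I Sk <= Psi E p nu I Tk)
  /\
  (* (2) *)
  (forall (eps : R), 0 < eps -> nu%:R / eps <= k%:R ->
   forall (Tk Tkn : {set V}),
     #|Tk| = k ->
     (forall T' : {set V}, #|T'| = k -> Psi E p nu I T' <= Psi E p nu I Tk) ->
     #|Tkn| = (k %/ nu)%N ->
     (forall T' : {set V}, #|T'| = (k %/ nu)%N ->
        Psi E p nu I T' <= Psi E p nu I Tkn) ->
     (1 - eps) / (nu.+1)%:R * Psi E p nu I Tk <= Psi E p nu I Tkn)
  /\
  (* (3) *)
  (forall T : {set V}, #|T| = (k %/ nu)%N ->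
     let S' := [set vj : V * 'I_mu | (vj.1 \in T) && (vj.2 < nu)%N] in
     (#|S'| <= k)%N /\ PhiGe1 E p nu I S' = Psi E p nu I T).
Proof.
move=> nu_ge2 nu_le_mu k_ge2 p_prob.
have nu_gt0 : (0 < nu)%N by apply: ltnW.
split; [|split].
- move=> Tk Sk cardTk Tk_max cardSk _.
  by apply: (PhiGe1_le_Psi_max p_prob nu_gt0 cardTk Tk_max); rewrite cardSk.
- move=> eps eps_gt0 nu_k Tk Tkn cardTk _ cardTkn Tkn_max.
  exact: (Psi_max_div_nu p_prob nu_gt0 (ltnW k_ge2) eps_gt0 nu_k cardTk cardTkn Tkn_max).
- move=> T cardT; split; last exact: PhiGe1_replicate.
  by rewrite card_replicate_seeds // cardT leq_divM.
Qed.
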